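(* Let $\mathcal{M}_c=\langle S_c,R_c,V_c\rangle$ be the canonical model of $\mathbf{K}^{\nabla\bullet}$. For every $\phi\in\mathcal{L}(\nabla,\bullet)$ and every $s\in S_c$: $\mathcal{M}_c,s\vDash\phi$ iff $\phi\in s$.
   Context: $\mathcal{L}(\nabla,\bullet)$: $\phi::=p\mid\neg\phi\mid\phi\land\phi\mid\nabla\phi\mid\bullet\phi$ over a nonempty set $\mathbf{P}$ of propositional variables; $\Delta\phi:=\neg\nabla\phi$, $\circ\phi:=\neg\bullet\phi$. Semantics on Kripke models $\langle S,R,V\rangle$: $s\vDash\nabla\phi$ iff there are $t,u$ with $sRt$, $sRu$, $t\vDash\phi$, $u\nvDash\phi$; $s\vDash\bullet\phi$ iff $s\vDash\phi$ and there is $t$ with $sRt$, $t\nvDash\phi$. The Hilbert system $\mathbf{K}^{\nabla\bullet}$ has axioms: A0 all propositional tautologies; A1 $\bullet\phi\to\phi$; A2 $\nabla\phi\leftrightarrow\nabla\neg\phi$; A3 $\bullet(\psi\to\phi)\land\phi\to\bullet\phi$; A4 $\nabla(\phi\land\psi)\to\nabla\phi\vee\nabla\psi$; A5 $\bullet(\phi\land\psi)\to\bullet\phi\vee\bullet\psi$; A6 $\nabla\phi\to\bullet\phi\vee\bullet\neg\phi$; A7 $\bullet(\phi\to\psi)\land\bullet(\neg\phi\to\chi)\to\nabla\phi$; rules R1 $\phi/\Delta\phi$; R2 $\phi/\circ\phi$; R3 $\phi\leftrightarrow\psi/\Delta\phi\leftrightarrow\Delta\psi$; R4 $\phi\leftrightarrow\psi/\circ\phi\leftrightarrow\circ\psi$;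 MP. The canonical model: $S_c$ is the set of maximal $\mathbf{K}^{\nabla\bullet}$-consistent sets; $sR_ct$ iff there exists $\psi$ such that (a) $\bullet\psi\in s$ and (b) for all $\phi$, if $\Delta\phi\land\circ(\neg\psi\to\phi)\in s$ then $\phi\in t$; $V_c(p)=\{s\in S_c\mid p\in s\}$. *)

From Stdlib Require Import List.
Import ListNotations.
Set Implicit Arguments.

Inductive form (P : Type) : Type :=
| Var : P -> form P
| Neg : form P -> form P
| And : form P -> form P -> form P
| Nab : form P -> form P
| Bul : form P -> form P.

Arguments Var {P} _.
Arguments Neg {P} _.
Arguments And {P} _ _.
Arguments Nab {P} _.
Arguments Bul {P} _.

Definition Imp {P} (a b : form P) : form P := Neg (And a (Neg b)).
Definition Or {P} (a b : form P) : form P := Neg (And (Neg a) (Neg b)).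
Definition Iff {P} (a b : form P) : form P := And (Imp a b) (Imp b a).
Definition Delta {P} (a : form P) : form P := Neg (Nab a).
Definition Circ {P} (a : form P) : form P := Neg (Bul a).

Fixpoint peval {P} (v : form P -> bool) (f : form P) : bool :=
  match f with
  | Var p => v (Var p)
  | Neg a => negb (peval v a)
  | And a b => andb (peval v a) (peval v b)
  | Nab a => v (Nab a)
  | Bul a => v (Bul a)
  end.

(* Propositional tautologies of L(nabla,bullet) (substitution instances of
   classical tautologies) *)
Definition tautology {P} (f : form P) : Prop := forall v, peval v f = true.

Inductive deriv {P : Type} : form P -> Prop :=
| A0 : forall f, tautology f -> deriv f
| A1 : forall f, deriv (Imp (Bul f) f)
| A2 : forall f, deriv (Iff (Nab f) (Nab (Neg f)))
| A3 : forall f g, deriv (Imp (And (Bul (Imp g f)) f) (Bul f))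
| A4 : forall f g, deriv (Imp (Nab (And f g)) (Or (Nab f) (Nab g)))
| A5 : forall f g, deriv (Imp (Bul (And f g)) (Or (Bul f) (Bul g)))
| A6 : forall f, deriv (Imp (Nab f) (Or (Bul f) (Bul (Neg f))))
| A7 : forall f g h,
    deriv (Imp (And (Bul (Imp f g)) (Bul (Imp (Neg f) h))) (Nab f))
| R1 : forall f, deriv f -> deriv (Delta f)
| R2 : forall f, deriv f -> deriv (Circ f)
| R3 : forall f g, deriv (Iff f g) -> deriv (Iff (Delta f) (Delta g))
| R4 : forall f g, deriv (Iff f g) -> deriv (Iff (Circ f) (Circ g))
| MP : forall f g, deriv (Imp f g) -> deriv f -> deriv g.

Fixpoint imp_list {P} (l : list (form P)) (f : form P) : form P :=
  match l with
  | [] => f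
  | a :: l' => Imp a (imp_list l' f)
  end.

Definition fset (P : Type) := form P -> Prop.

Definition consistent {P} (G : fset P) : Prop :=
  ~ exists (l : list (form P)) (f : form P),
      (forall x, In x l -> G x) /\
      deriv (imp_list l f) /\ deriv (imp_list l (Neg f)).

Definition maximal_consistent {P} (G : fset P) : Prop :=
  consistent G /\
  forall D : fset P, consistent D -> (forall x, G x -> D x) -> forall x, D x -> G x.

Record model (P : Type) := {
  world : Type;
  rel : world -> world -> Prop;
  val : P -> world -> Prop
}.

Fixpoint sat {P} (M : model P) (s : world M) (f : form P) : Prop :=
  match f with
  | Var p => val M p s
  | Neg a => ~ sat M s a
  | And a b => sat M s a /\ sat M s b
  | Nab a => exists t u, rel M s t /\ rel M s u /\ sat M t a /\ ~ sat M u a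
  | Bul a => sat M s a /\ exists t, rel M s t /\ ~ sat M t a
  end.

Definition Sc (P : Type) : Type := { s : fset P | maximal_consistent s }.

Definition Rc {P} (s t : Sc P) : Prop :=
  exists psi : form P,
    proj1_sig s (Bul psi) /\
    forall phi : form P,
      proj1_sig s (And (Delta phi) (Circ (Imp (Neg psi) phi))) ->
      proj1_sig t phi.

Definition Vc {P} (p : P) (s : Sc P) : Prop := proj1_sig s (Var p).

Definition canonical_model (P : Type) : model P :=
  {| world := Sc P; rel := @Rc P; val := @Vc P |}.

(* If [•ψ ∈ s], the set core(s,ψ) = {φ | Δφ ∧ ∘(¬ψ → φ) ∈ s} contains
   the tautologies and is closed under conjunction (A4, A5), so an
   inconsistency of core(s,ψ) ∪ {χ} is witnessed by a single φ ∈ core(s,ψ) with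
   ⊢ φ → ¬χ.  This shows that core(s,ψ) ∪ {¬ψ} is consistent, and so is
   core(s,ψ) ∪ {ψ} when moreover [∇ψ ∈ s] (A1, A2, A4, A6); Lindenbaum's lemma
   turns these sets into R_c-successors of s refuting, resp. verifying, ψ.
   Conversely, a successor refuting a true ψ forces [•ψ ∈ s] (A3, A6), and two
   successors disagreeing on ψ force [∇ψ ∈ s] (A7).  Since P may be uncountable,
   Lindenbaum's lemma is obtained from Tukey's lemma, proved by a Bourbaki–Witt
   tower argument. *)

From Stdlib Require Import List Classical ClassicalEpsilon.
From Stdlib Require Import FunctionalExtensionality PropExtensionality.
Import ListNotations.

Ltac prop_taut :=
  let v := fresh "v" in
  intro v; cbn [imp_list]; unfold Imp, Or, Iff, Delta, Circ; simpl;
  repeat match goal with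
  | |- context [peval v ?x] => destruct (peval v x)
  | |- context [v ?x] => destruct (v x)
  end; reflexivity.

Definition sub {T} (X Y : T -> Prop) : Prop := forall x, X x -> Y x.

Lemma sub_refl {T} (X : T -> Prop) : sub X X.
Proof. intros x; auto. Qed.

Lemma sub_trans {T} {X Y Z : T -> Prop} : sub X Y -> sub Y Z -> sub X Z.
Proof. intros H1 H2 x Hx; auto. Qed.

Lemma sub_antisym {T} {X Y : T -> Prop} : sub X Y -> sub Y X -> X = Y.
Proof.
  intros H1 H2. apply functional_extensionality. intro x.
  apply propositional_extensionality. split; auto.
Qed.

Section Tukey.
Context {T : Type}.
Variable ok : (T -> Prop) -> Prop.
Hypothesis ok_finite_character :
  forall X, ok X <-> forall l, Forall X l -> ok (fun x => In x l).
Variable G : T -> Prop.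
Hypothesis ok_G : ok G.

Definition proper_ok_extension (X Y : T -> Prop) := ok Y /\ sub X Y /\ ~ sub Y X.

Definition next (X : T -> Prop) : T -> Prop :=
  match excluded_middle_informative (exists Y, proper_ok_extension X Y) with
  | left H => proj1_sig (constructive_indefinite_description _ H)
  | right _ => X
  end.

Lemma next_proper {X} :
  (exists Y, proper_ok_extension X Y) -> proper_ok_extension X (next X).
Proof.
  intro H. unfold next. destruct excluded_middle_informative as [H'|]; [|contradiction].
  exact (proj2_sig (constructive_indefinite_description _ H')).
Qed.

Lemma sub_next X : sub X (next X).
Proof.
  destruct (classic (exists Y, proper_ok_extension X Y)) as [H|H].
  - apply next_proper in H. apply H.
  - unfold next. destruct excluded_middle_informative; [contradiction | apply sub_refl].
Qed.

Lemma ok_next {X} : ok X -> ok (next X).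
Proof.
  intro HX. destruct (classic (exists Y, proper_ok_extension X Y)) as [H|H].
  - apply next_proper in H. apply H.
  - unfold next. destruct excluded_middle_informative; [contradiction | exact HX].
Qed.

Definition base_union (C : (T -> Prop) -> Prop) : T -> Prop :=
  fun x => G x \/ exists X, C X /\ X x.

Inductive tower : (T -> Prop) -> Prop :=
| tower_base : tower G
| tower_next X : tower X -> tower (next X)
| tower_union C : (forall X, C X -> tower X) -> tower (base_union C).

Lemma tower_sub_base {X} : tower X -> sub G X.
Proof.
  induction 1 as [| X _ IH | C _ _].
  - apply sub_refl.
  - exact (sub_trans IH (sub_next X)).
  - intros x Gx. left; exact Gx.
Qed.

Definition extreme (c : T -> Prop) :=
  forall x, tower x -> sub x c -> ~ sub c x -> sub (next x) c.

Lemma extreme_split {c x} : tower c -> extreme c -> tower x ->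
  sub x c \/ sub (next c) x.
Proof.
  intros Tc Ec Tx. induction Tx as [| x Tx IH | C HC IH].
  - left. apply tower_sub_base, Tc.
  - destruct IH as [IH|IH].
    + destruct (classic (sub c x)) as [H|H].
      * right. rewrite (sub_antisym IH H). apply sub_refl.
      * left. apply Ec; auto.
    + right. exact (sub_trans IH (sub_next x)).
  - destruct (classic (exists X, C X /\ ~ sub X c)) as [[X [CX nX]]|H].
    + right. destruct (IH X CX) as [|HX]; [contradiction|].
      intros y Hy. right. exists X. auto.
    + left. intros y [Gy | (X & CX & Xy)].
      * apply (tower_sub_base Tc), Gy.
      * apply NNPP. intro ny. apply H. exists X. auto.
Qed.

Lemma tower_extreme {c} : tower c -> extreme c.
Proof.
  induction 1 as [| c Tc IH | C HC IH]; intros x Tx H1 H2.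
  - exfalso. apply H2, tower_sub_base, Tx.
  - destruct (extreme_split Tc IH Tx) as [H|H]; [|contradiction].
    destruct (classic (sub c x)) as [H'|H'].
    + rewrite (sub_antisym H H'). apply sub_refl.
    + exact (sub_trans (IH x Tx H H') (sub_next c)).
  - destruct (classic (exists Y, C Y /\ ~ sub Y x)) as [(Y & CY & nY)|H].
    + destruct (extreme_split (HC Y CY) (IH Y CY) Tx) as [H|H].
      * apply (sub_trans (Y := Y)).
        -- apply (IH Y CY); auto.
        -- intros y Hy. right. eauto.
      * exfalso. apply nY, (sub_trans (sub_next Y) H).
    + exfalso. apply H2. intros y [Gy | (X & CX & Xy)].
      * apply (tower_sub_base Tx), Gy.
      * apply NNPP. intro ny. apply H. exists X. auto.
Qed.

Lemma tower_total {X Y} : tower X -> tower Y -> sub X Y \/ sub Y X.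
Proof.
  intros TX TY. destruct (extreme_split TY (tower_extreme TY) TX) as [H|H]; auto.
  right. exact (sub_trans (sub_next Y) H).
Qed.

Lemma base_union_list_bound {C l} : (forall X, C X -> tower X) ->
  Forall (base_union C) l -> exists Y, (Y = G \/ C Y) /\ Forall Y l.
Proof.
  intros HC Hl. induction Hl as [| y l Hy _ (Y & HY & Yl)].
  - exists G; auto.
  - assert (HZ : exists Z, (Z = G \/ C Z) /\ Z y).
    { destruct Hy as [Gy | (Z & CZ & Zy)]; [exists G | exists Z]; auto. }
    destruct HZ as (Z & HZ & Zy).
    assert (TY : tower Y) by (destruct HY as [->|]; [constructor | auto]).
    assert (TZ : tower Z) by (destruct HZ as [->|]; [constructor | auto]).
    destruct (tower_total TY TZ) as [H|H].
    + exists Z. split; auto. constructor; auto. eapply Forall_impl; [exact H | exact Yl].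
    + exists Y. split; auto.
Qed.

Lemma tower_ok {X} : tower X -> ok X.
Proof.
  induction 1 as [| X _ IH | C HC IH].
  - exact ok_G.
  - apply ok_next, IH.
  - apply ok_finite_character. intros l Hl.
    destruct (base_union_list_bound HC Hl) as (Y & HY & Yl).
    assert (okY : ok Y) by (destruct HY as [->|]; auto).
    exact (proj1 (ok_finite_character Y) okY l Yl).
Qed.

Theorem tukey : exists M, ok M /\ sub G M /\
  forall D, ok D -> sub M D -> sub D M.
Proof.
  assert (TM : tower (base_union tower)) by (constructor; auto).
  exists (base_union tower). split; [|split].
  - apply tower_ok, TM.
  - intros x Gx. left; exact Gx.
  - intros D okD MD. apply NNPP. intro nDM.
    destruct (next_proper (ex_intro _ D (conj okD (conj MD nDM)))) as (_ & _ & H).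
    apply H. intros y Hy. right. exists (next (base_union tower)).
    split; [constructor; exact TM | exact Hy].
Qed.

End Tukey.

Section Propositional.
Context {P : Type}.
Implicit Types (f g : form P) (l : list (form P)) (v : form P -> bool).

Definition add_form (G : fset P) f : fset P := fun x => G x \/ x = f.

Lemma peval_imp_list v l g :
  peval v (imp_list l g) = true <->
  (Forall (fun x => peval v x = true) l -> peval v g = true).
Proof.
  induction l as [|x l IH]; cbn [imp_list].
  - split; [auto | intro H; apply H; constructor].
  - rewrite Forall_cons_iff. unfold Imp; simpl.
    destruct (peval v x); simpl.
    + rewrite Bool.negb_involutive, IH. tauto.
    + intuition discriminate.
Qed.

Lemma deriv_taut l g : Forall deriv l -> tautology (imp_list l g) -> deriv g.
Proof.
  intros Hl Ht. apply A0 in Ht. induction Hl as [|x l Hx _ IH]; auto.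
  apply IH, (MP Ht Hx).
Qed.

Lemma peval_fold_and v d l :
  peval v (fold_right And d l) = true -> Forall (fun x => peval v x = true) l.
Proof.
  induction l as [|x l IH]; simpl; auto.
  intro H. apply andb_prop in H. destruct H. auto.
Qed.

Lemma deriv_bul_congr {f g} : deriv (Iff f g) -> deriv (Iff (Bul f) (Bul g)).
Proof.
  intro H. apply (deriv_taut [Iff (Circ f) (Circ g)]); [auto using R4 | prop_taut].
Qed.

Lemma deriv_nab_congr {f g} : deriv (Iff f g) -> deriv (Iff (Nab f) (Nab g)).
Proof.
  intro H. apply (deriv_taut [Iff (Delta f) (Delta g)]); [auto using R3 | prop_taut].
Qed.

Lemma Forall_add_form_split {G : fset P} {f l} : Forall (add_form G f) l ->
  exists m, Forall G m /\ forall v, Forall (fun x => peval v x = true) m ->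
    peval v f = true -> Forall (fun x => peval v x = true) l.
Proof.
  induction 1 as [|x l [Gx | ->] _ (m & Gm & Hm)].
  - exists []; auto.
  - exists (x :: m). split; [auto|].
    intros v Hv Hf. inversion Hv; subst. constructor; auto.
  - exists m. auto.
Qed.

Lemma inconsistent_add_form {G : fset P} {f} : ~ consistent (add_form G f) ->
  exists m, Forall G m /\ deriv (imp_list m (Neg f)).
Proof.
  intro H. apply NNPP in H. destruct H as (l & g & Hl & Dg & Dng).
  apply Forall_forall in Hl. destruct (Forall_add_form_split Hl) as (m & Gm & Hm).
  exists m. split; auto. apply (deriv_taut [imp_list l g; imp_list l (Neg g)]); [auto|].
  intro v. apply peval_imp_list. rewrite !Forall_cons_iff, !peval_imp_list.
  intros (E1 & E2 & _) Hv. simpl.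
  destruct (peval v f) eqn:Ef; auto.
  specialize (Hm v Hv Ef). simpl in E2. rewrite (E1 Hm) in E2. discriminate (E2 Hm).
Qed.

End Propositional.

Section MaximalConsistent.
Context {P : Type}.
Implicit Types (f g : form P) (l : list (form P)).

Lemma consistent_finite_character (G : fset P) :
  consistent G <-> forall l, Forall G l -> consistent (fun x => In x l).
Proof.
  split.
  - intros HG l Gl (m & f & Hm & D). apply HG. exists m, f. split; auto.
    intros x Hx. exact (proj1 (Forall_forall G l) Gl x (Hm x Hx)).
  - intros H (l & f & Hl & D). apply (H l).
    + apply Forall_forall, Hl.
    + exists l, f. auto.
Qed.

Lemma lindenbaum (G : fset P) : consistent G ->
  exists s, maximal_consistent s /\ sub G s.
Proof.
  intro HG.
  destruct (tukey consistent consistent_finite_character G HG) as (s & Hs & Gs & Hmax).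
  exists s. repeat split; auto.
Qed.

Context {s : fset P}.
Hypothesis Hs : maximal_consistent s.

Lemma mcs_ded {l g} : Forall s l -> deriv (imp_list l g) -> s g.
Proof.
  destruct Hs as [Hc Hmax]. intros Hl Dg.
  apply (Hmax (add_form s g)); [| intros x Hx; left; exact Hx | right; reflexivity].
  intros (l' & h & Hl' & Dh & Dnh). apply Forall_forall in Hl'.
  destruct (Forall_add_form_split Hl') as (m & Hm & Hsplit).
  apply Hc. exists (l ++ m), h. split.
  { apply Forall_forall, Forall_app. auto. }
  split; [apply (deriv_taut [imp_list l g; imp_list l' h])
         | apply (deriv_taut [imp_list l g; imp_list l' (Neg h)])]; auto;
    intro v; apply peval_imp_list; rewrite !Forall_cons_iff, !peval_imp_list;
    rewrite Forall_app; intros (E1 & E2 & _) [Hv1 Hv2]; auto.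
Qed.

Lemma mcs_deriv {f} : deriv f -> s f.
Proof. intro D. apply (@mcs_ded []); auto. Qed.

Lemma mcs_imp_elim {a g} : s (Imp a g) -> s a -> s g.
Proof. intros H1 H2. apply (@mcs_ded [Imp a g; a]); [auto | apply A0; prop_taut]. Qed.

Lemma mcs_neg f : s (Neg f) <-> ~ s f.
Proof.
  split.
  - intros Hn Hf. apply (proj1 Hs). exists [f; Neg f], f.
    split; [intros x [<- | [<- | []]]; auto |].
    split; apply A0; prop_taut.
  - intro nf. destruct (classic (consistent (add_form s f))) as [Hc|Hc].
    + exfalso. apply nf, (proj2 Hs _ Hc).
      * intros x Hx. left. exact Hx.
      * right. reflexivity.
    + destruct (inconsistent_add_form Hc) as (m & Hm & D). exact (mcs_ded Hm D).
Qed.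

Lemma mcs_absurd {f} : s f -> s (Neg f) -> False.
Proof. intros Hf Hn. exact (proj1 (mcs_neg f) Hn Hf). Qed.

End MaximalConsistent.

(* Reverts every hypothesis [s x] and closes the goal [s g] by checking that
   the resulting implication is a propositional tautology. *)
Ltac mcs_prop Hs :=
  lazymatch goal with
  | |- ?s _ =>
      repeat match goal with H : s _ |- _ => revert H; apply (mcs_imp_elim Hs) end;
      apply (mcs_deriv Hs), A0; prop_taut
  end.

Lemma mcs_and {P} {s : fset P} (Hs : maximal_consistent s) a b :
  s (And a b) <-> s a /\ s b.
Proof.
  split.
  - intro H. split; mcs_prop Hs.
  - intros [Ha Hb]. mcs_prop Hs.
Qed.

Definition rc_core {P} (s : fset P) (psi : form P) : fset P :=
  fun phi => s (And (Delta phi) (Circ (Imp (Neg psi) phi))).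

Section CanonicalCore.
Context {P : Type}.
Context {s : fset P}.
Hypothesis Hs : maximal_consistent s.
Implicit Types (a b f psi : form P).

Lemma rc_core_taut psi f : tautology f -> rc_core s psi f.
Proof.
  intro Hf.
  pose proof (mcs_deriv Hs (R1 (A0 Hf))).
  assert (Hg : tautology (Imp (Neg psi) f)).
  { intro v. simpl. rewrite (Hf v). destruct (peval v psi); reflexivity. }
  pose proof (mcs_deriv Hs (R2 (A0 Hg))).
  unfold rc_core. mcs_prop Hs.
Qed.

Lemma rc_core_and psi a b :
  rc_core s psi a -> rc_core s psi b -> rc_core s psi (And a b).
Proof.
  unfold rc_core. intros Ha Hb.
  pose proof (mcs_deriv Hs (A4 a b)).
  pose proof (mcs_deriv Hs (A5 (Imp (Neg psi) a) (Imp (Neg psi) b))).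
  assert (Hcongr : tautology (Iff (And (Imp (Neg psi) a) (Imp (Neg psi) b))
                                  (Imp (Neg psi) (And a b)))) by prop_taut.
  pose proof (mcs_deriv Hs (deriv_bul_congr (A0 Hcongr))).
  mcs_prop Hs.
Qed.

Lemma rc_core_fold_and psi d l : tautology d ->
  Forall (rc_core s psi) l -> rc_core s psi (fold_right And d l).
Proof. intro Hd. induction 1; simpl; auto using rc_core_taut, rc_core_and. Qed.

Lemma rc_core_inconsistent_add psi f :
  ~ consistent (add_form (rc_core s psi) f) ->
  exists phi, rc_core s psi phi /\ deriv (Imp phi (Neg f)).
Proof.
  intro H. destruct (inconsistent_add_form H) as (m & Hm & D).
  exists (fold_right And (Imp f f) m). split.
  - apply rc_core_fold_and; [prop_taut | exact Hm].
  - apply (deriv_taut [imp_list m (Neg f)]); [auto |].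
    intro v. apply peval_imp_list. rewrite Forall_cons_iff, peval_imp_list.
    intros [E _]. set (c := fold_right And (Imp f f) m). unfold Imp. simpl.
    destruct (peval v c) eqn:Ec; [| reflexivity].
    specialize (E (peval_fold_and _ _ _ Ec)). simpl in E. rewrite E. reflexivity.
Qed.

Lemma rc_core_add_neg_consistent b :
  s (Bul b) -> consistent (add_form (rc_core s b) (Neg b)).
Proof.
  intro Hb. apply NNPP. intro H.
  destruct (rc_core_inconsistent_add _ _ H) as (phi & Hphi & D).
  assert (Hequiv : deriv (Iff (Imp (Neg b) phi) b)).
  { apply (deriv_taut [Imp phi (Neg (Neg b))]); [auto | prop_taut]. }
  pose proof (mcs_deriv Hs (deriv_bul_congr Hequiv)).
  unfold rc_core in Hphi. apply (mcs_absurd Hs Hb). mcs_prop Hs.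
Qed.

Lemma rc_core_add_consistent b :
  s (Bul b) -> s (Nab b) -> consistent (add_form (rc_core s b) b).
Proof.
  intros Hb Hnb. apply NNPP. intro H.
  destruct (rc_core_inconsistent_add _ _ H) as (phi & Hphi & D).
  set (X := Imp (Neg b) phi).
  assert (Hequiv : deriv (Iff b (And X (Neg phi)))).
  { apply (deriv_taut [Imp phi (Neg b)]); [auto | subst X; prop_taut]. }
  pose proof (mcs_deriv Hs (deriv_nab_congr Hequiv)).
  pose proof (mcs_deriv Hs (A4 X (Neg phi))).
  pose proof (mcs_deriv Hs (A2 phi)).
  pose proof (mcs_deriv Hs (A6 X)).
  pose proof (mcs_deriv Hs (A1 (Neg X))).
  pose proof (mcs_deriv Hs (A1 b)).
  unfold rc_core in Hphi. apply (mcs_absurd Hs Hnb). subst X. mcs_prop Hs.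
Qed.

Lemma bul_of_rc_core_refuter b psi (t : fset P) :
  s b -> sub (rc_core s psi) t -> ~ t b -> s (Bul b).
Proof.
  intros Hb Ht nTb. apply NNPP. intro nB. apply (mcs_neg Hs) in nB.
  apply nTb, Ht. unfold rc_core.
  pose proof (mcs_deriv Hs (A6 b)).
  pose proof (mcs_deriv Hs (A1 (Neg b))).
  pose proof (mcs_deriv Hs (A3 b (Neg psi))).
  mcs_prop Hs.
Qed.

Lemma nab_of_rc_core_disagreement a p1 p2 (t u : fset P) : maximal_consistent t ->
  sub (rc_core s p1) t -> sub (rc_core s p2) u -> t a -> ~ u a -> s (Nab a).
Proof.
  intros Mt Ht Hu Ta nUa. apply NNPP. intro nN. apply (mcs_neg Hs) in nN.
  assert (B2 : s (Bul (Imp (Neg p2) a))).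
  { apply NNPP. intro nB. apply (mcs_neg Hs) in nB. apply nUa, Hu.
    unfold rc_core. mcs_prop Hs. }
  assert (B1 : s (Bul (Imp (Neg p1) (Neg a)))).
  { apply NNPP. intro nB. apply (mcs_neg Hs) in nB.
    apply (mcs_absurd Mt Ta), Ht. unfold rc_core.
    pose proof (mcs_deriv Hs (A2 a)). mcs_prop Hs. }
  assert (E1 : deriv (Iff (Imp (Neg p1) (Neg a)) (Imp a p1))) by (apply A0; prop_taut).
  assert (E2 : deriv (Iff (Imp (Neg p2) a) (Imp (Neg a) p2))) by (apply A0; prop_taut).
  pose proof (mcs_deriv Hs (deriv_bul_congr E1)).
  pose proof (mcs_deriv Hs (deriv_bul_congr E2)).
  pose proof (mcs_deriv Hs (A7 a p1 p2)).
  apply (mcs_absurd Hs nN). mcs_prop Hs.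
Qed.

End CanonicalCore.

Section CanonicalModel.
Context {P : Type}.
Implicit Types (a b psi f : form P) (s t u : Sc P).

Lemma Rc_intro s t psi :
  proj1_sig s (Bul psi) -> sub (rc_core (proj1_sig s) psi) (proj1_sig t) -> Rc s t.
Proof. intros Hb Ht. exists psi. split; [exact Hb | exact Ht]. Qed.

Lemma Rc_sub_core s t : Rc s t -> exists psi, sub (rc_core (proj1_sig s) psi) (proj1_sig t).
Proof. intros (psi & _ & Ht). exists psi. exact Ht. Qed.

Lemma Rc_successor_of_consistent s psi f : proj1_sig s (Bul psi) ->
  consistent (add_form (rc_core (proj1_sig s) psi) f) ->
  exists t, Rc s t /\ proj1_sig t f.
Proof.
  intros Hb Hc. destruct (lindenbaum _ Hc) as (T & HT & Hsub).
  exists (exist _ T HT). split.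
  - apply (Rc_intro _ _ psi Hb). intros x Hx. apply Hsub. left. exact Hx.
  - apply Hsub. right. reflexivity.
Qed.

Lemma Rc_refuting_successor s b :
  proj1_sig s (Bul b) -> exists u, Rc s u /\ ~ proj1_sig u b.
Proof.
  intro Hb. destruct s as [s Hs].
  destruct (Rc_successor_of_consistent _ _ _ Hb (rc_core_add_neg_consistent Hs b Hb))
    as ([u Hu] & Ru & Ub).
  exists (exist _ u Hu). split; [exact Ru | exact (proj1 (mcs_neg Hu b) Ub)].
Qed.

Lemma Rc_disagreeing_successors s b : proj1_sig s (Bul b) -> proj1_sig s (Nab b) ->
  exists t u, Rc s t /\ Rc s u /\ proj1_sig t b /\ ~ proj1_sig u b.
Proof.
  intros Hb Hnb. destruct (Rc_refuting_successor s b Hb) as (u & Ru & Ub).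
  destruct s as [s Hs].
  destruct (Rc_successor_of_consistent _ _ _ Hb (rc_core_add_consistent Hs b Hb Hnb))
    as (t & Rt & Tb).
  exists t, u. auto.
Qed.

Lemma canonical_bul s a :
  (proj1_sig s a /\ exists t, Rc s t /\ ~ proj1_sig t a) <-> proj1_sig s (Bul a).
Proof.
  destruct s as [s Hs]; simpl. split.
  - intros [Ha ([t Ht] & Rt & nTa)]. destruct (Rc_sub_core _ _ Rt) as (psi & Hpsi).
    exact (bul_of_rc_core_refuter Hs a psi t Ha Hpsi nTa).
  - intro Hb. split.
    + pose proof (mcs_deriv Hs (A1 a)). mcs_prop Hs.
    + exact (Rc_refuting_successor (exist _ s Hs) a Hb).
Qed.

Lemma canonical_nab s a :
  (exists t u, Rc s t /\ Rc s u /\ proj1_sig t a /\ ~ proj1_sig u a) <->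
  proj1_sig s (Nab a).
Proof.
  split.
  - intros ([t Ht] & [u Hu] & Rt & Ru & Ta & nUa).
    destruct (Rc_sub_core _ _ Rt) as (p1 & Hp1), (Rc_sub_core _ _ Ru) as (p2 & Hp2).
    exact (nab_of_rc_core_disagreement (proj2_sig s) a p1 p2 t u Ht Hp1 Hp2 Ta nUa).
  - intro Hn. destruct s as [s Hs]; simpl in Hn.
    destruct (classic (s (Bul a))) as [Hb | nB].
    + exact (Rc_disagreeing_successors (exist _ s Hs) a Hb Hn).
    + apply (mcs_neg Hs) in nB.
      assert (Hb : s (Bul (Neg a))).
      { pose proof (mcs_deriv Hs (A6 a)). mcs_prop Hs. }
      assert (Hn' : s (Nab (Neg a))).
      { pose proof (mcs_deriv Hs (A2 a)). mcs_prop Hs. }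
      destruct (Rc_disagreeing_successors (exist _ s Hs) (Neg a) Hb Hn')
        as ([t Ht] & [u Hu] & Rt & Ru & Ta & nUa).
      exists (exist _ u Hu), (exist _ t Ht). simpl.
      rewrite (mcs_neg Hu), (mcs_neg Ht) in *. tauto.
Qed.

Lemma truth_lemma (phi : form P) (s : Sc P) :
  sat (canonical_model P) s phi <-> proj1_sig s phi.
Proof.
  revert s. induction phi as [p | a IH | a IHa b IHb | a IH | a IH]; intro s; simpl.
  - reflexivity.
  - rewrite IH. symmetry. apply (mcs_neg (proj2_sig s)).
  - rewrite IHa, IHb. symmetry. apply (mcs_and (proj2_sig s)).
  - setoid_rewrite IH. apply canonical_nab.
  - setoid_rewrite IH. apply canonical_bul.
Qed.

End CanonicalModel.

Theorem lemma1 (P : Type) (HP : inhabited P) (phi : form P)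
  (s : world (canonical_model P)) :
  sat (canonical_model P) s phi <-> proj1_sig s phi.
Proof. exact (truth_lemma phi s). Qed.
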